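(* Let $\beta\ge1$. There exist $\epsilon_0>0$ and a function $g:(0,\epsilon_0)\to(0,\infty)$ with $\lim_{t\to0}g(t)=0$ such that the following holds. Let $\mathcal{Y}_1,\mathcal{Y}_2$ be Banach spaces, $0<\epsilon<\epsilon_0$, and let $L:\mathcal{Y}_1\to\mathcal{Y}_2$, $R:\mathcal{Y}_2\to\mathcal{Y}_1$ be operators such that $RL-I$ is compact, $\|RL-I\|\le\epsilon$ and $\|L\|,\|R\|\le\beta$. Then there exist a Banach space $\mathcal{Y}_3$ and an invertible operator $S:\mathcal{Y}_2\to\mathcal{Y}_1\oplus\mathcal{Y}_3$ with $\|S\|\|S^{-1}\|\le7\beta^6$ such that for all $T_1\in B(\mathcal{Y}_1)$ and $T_2\in B(\mathcal{Y}_2)$ with $LT_1-T_2L$ and $T_1R-RT_2$ compact, there are a compact operator $K$ on $\mathcal{Y}_2$ and an operator $T_3$ on $\mathcal{Y}_3$ with $S(T_2+K)S^{-1}=T_1\oplus T_3$, and moreover $\|K\|\le g(\epsilon)(\|T_2\|+1)$ whenever $\|LT_1-T_2L\|\le\epsilon$ and $\|T_1R-RT_2\|\le\epsilon$.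
   Context: Here $\mathcal{Y}_1\oplus\mathcal{Y}_3$ is the direct sum normed by $\|(y_1,y_3)\|=\|y_1\|+\|y_3\|$, and $(T_1\oplus T_3)(y_1,y_3)=(T_1y_1,T_3y_3)$. All operators are bounded linear. *)

From Stdlib Require Import Reals Lra Classical ClassicalDescription.
Open Scope R_scope.

Inductive scalar_kind := RealScalars | ComplexScalars.

Definition scal (k : scalar_kind) : Type :=
  match k with RealScalars => R | ComplexScalars => (R * R)%type end.

Definition sadd (k : scalar_kind) : scal k -> scal k -> scal k :=
  match k as k0 return scal k0 -> scal k0 -> scal k0 with
  | RealScalars => Rplus
  | ComplexScalars => fun a b => (fst a + fst b, snd a + snd b)
  end.

Definition smul (k : scalar_kind) : scal k -> scal k -> scal k :=
  match k as k0 return scal k0 -> scal k0 -> scal k0 with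
  | RealScalars => Rmult
  | ComplexScalars => fun a b =>
      (fst a * fst b - snd a * snd b, fst a * snd b + snd a * fst b)
  end.

Definition sone (k : scalar_kind) : scal k :=
  match k as k0 return scal k0 with
  | RealScalars => 1
  | ComplexScalars => (1, 0)
  end.

Definition sabs (k : scalar_kind) : scal k -> R :=
  match k as k0 return scal k0 -> R with
  | RealScalars => Rabs
  | ComplexScalars => fun a => sqrt (fst a * fst a + snd a * snd a)
  end.

Record NormedSpace (k : scalar_kind) : Type := {
  ns_car :> Type;
  vzero : ns_car;
  vadd : ns_car -> ns_car -> ns_car;
  vopp : ns_car -> ns_car;
  vscale : scal k -> ns_car -> ns_car;
  vnorm : ns_car -> R;
  vaddA : forall x y z, vadd x (vadd y z) = vadd (vadd x y) z;
  vaddC : forall x y, vadd x y = vadd y x;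
  vadd0 : forall x, vadd x vzero = x;
  vaddN : forall x, vadd x (vopp x) = vzero;
  vscaleA : forall a b x, vscale a (vscale b x) = vscale (smul k a b) x;
  vscale1 : forall x, vscale (sone k) x = x;
  vscaleDr : forall a x y, vscale a (vadd x y) = vadd (vscale a x) (vscale a y);
  vscaleDl : forall a b x, vscale (sadd k a b) x = vadd (vscale a x) (vscale b x);
  vnorm_ge0 : forall x, 0 <= vnorm x;
  vnorm_eq0 : forall x, vnorm x = 0 -> x = vzero;
  vnorm_scale : forall a x, vnorm (vscale a x) = sabs k a * vnorm x;
  vnorm_triangle : forall x y, vnorm (vadd x y) <= vnorm x + vnorm y
}.

Arguments ns_car {k} _.
Arguments vzero {k} _.
Arguments vadd {k X} _ _ : rename.
Arguments vopp {k X} _ : rename.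
Arguments vscale {k X} _ _ : rename.
Arguments vnorm {k X} _ : rename.

Definition vsub {k} {X : NormedSpace k} (x y : X) : X := vadd x (vopp y).

Definition cauchy_seq {k} {X : NormedSpace k} (u : nat -> X) : Prop :=
  forall e, 0 < e -> exists N : nat, forall m n : nat,
    (N <= m)%nat -> (N <= n)%nat -> vnorm (vsub (u m) (u n)) < e.

Definition converges_to {k} {X : NormedSpace k} (u : nat -> X) (l : X) : Prop :=
  forall e, 0 < e -> exists N : nat, forall n : nat,
    (N <= n)%nat -> vnorm (vsub (u n) l) < e.

Definition complete {k} (X : NormedSpace k) : Prop :=
  forall u : nat -> X, cauchy_seq u -> exists l, converges_to u l.

Definition is_linear {k} {X Y : NormedSpace k} (f : X -> Y) : Prop :=
  (forall x y, f (vadd x y) = vadd (f x) (f y)) /\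
  (forall a x, f (vscale a x) = vscale a (f x)).

Definition is_bounded {k} {X Y : NormedSpace k} (f : X -> Y) : Prop :=
  exists M, forall x, vnorm (f x) <= M * vnorm x.

Definition is_operator {k} {X Y : NormedSpace k} (f : X -> Y) : Prop :=
  is_linear f /\ is_bounded f.

(* { ||f x|| : ||x|| <= 1 } (with 0 adjoined; harmless since norms are >= 0
   and f 0 = 0 for linear f). *)
Definition opnorm_set {k} {X Y : NormedSpace k} (f : X -> Y) : R -> Prop :=
  fun r => r = 0 \/ exists x, vnorm x <= 1 /\ r = vnorm (f x).

Lemma opnorm_set_ne {k} {X Y : NormedSpace k} (f : X -> Y) :
  exists r, opnorm_set f r.
Proof. exists 0; left; reflexivity. Qed.

(* Operator norm: sup_{||x|| <= 1} ||f x|| (0 if unbounded; only used on operators). *)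
Definition opnorm {k} {X Y : NormedSpace k} (f : X -> Y) : R :=
  match excluded_middle_informative (bound (opnorm_set f)) with
  | left Hb => proj1_sig (completeness _ Hb (opnorm_set_ne f))
  | right _ => 0
  end.

Definition compact_op {k} {X Y : NormedSpace k} (f : X -> Y) : Prop :=
  forall x : nat -> X, (forall n, vnorm (x n) <= 1) ->
    exists phi : nat -> nat, (forall n, (phi n < phi (S n))%nat) /\
      exists l : Y, converges_to (fun n => f (x (phi n))) l.

Section DSum.
Context {k : scalar_kind} (X Y : NormedSpace k).

Definition ds_add (p q : X * Y) : X * Y := (vadd (fst p) (fst q), vadd (snd p) (snd q)).
Definition ds_opp (p : X * Y) : X * Y := (vopp (fst p), vopp (snd p)).
Definition ds_scale (a : scal k) (p : X * Y) : X * Y := (vscale a (fst p), vscale a (snd p)).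
Definition ds_norm (p : X * Y) : R := vnorm (fst p) + vnorm (snd p).

Lemma ds_addA x y z : ds_add x (ds_add y z) = ds_add (ds_add x y) z.
Proof. unfold ds_add; simpl; now rewrite !vaddA. Qed.
Lemma ds_addC x y : ds_add x y = ds_add y x.
Proof. unfold ds_add; now rewrite (vaddC _ _ (fst x)), (vaddC _ _ (snd x)). Qed.
Lemma ds_add0 x : ds_add x (vzero X, vzero Y) = x.
Proof. destruct x; unfold ds_add; simpl; now rewrite !vadd0. Qed.
Lemma ds_addN x : ds_add x (ds_opp x) = (vzero X, vzero Y).
Proof. unfold ds_add, ds_opp; simpl; now rewrite !vaddN. Qed.
Lemma ds_scaleA a b x : ds_scale a (ds_scale b x) = ds_scale (smul k a b) x.
Proof. unfold ds_scale; simpl; now rewrite !vscaleA. Qed.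
Lemma ds_scale1 x : ds_scale (sone k) x = x.
Proof. destruct x; unfold ds_scale; simpl; now rewrite !vscale1. Qed.
Lemma ds_scaleDr a x y : ds_scale a (ds_add x y) = ds_add (ds_scale a x) (ds_scale a y).
Proof. unfold ds_scale, ds_add; simpl; now rewrite !vscaleDr. Qed.
Lemma ds_scaleDl a b x : ds_scale (sadd k a b) x = ds_add (ds_scale a x) (ds_scale b x).
Proof. unfold ds_scale, ds_add; simpl; now rewrite !vscaleDl. Qed.
Lemma ds_norm_ge0 x : 0 <= ds_norm x.
Proof. unfold ds_norm; pose proof (vnorm_ge0 _ _ (fst x)); pose proof (vnorm_ge0 _ _ (snd x)); lra. Qed.
Lemma ds_norm_eq0 x : ds_norm x = 0 -> x = (vzero X, vzero Y).
Proof.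
  destruct x as [a b]; unfold ds_norm; simpl; intro H.
  pose proof (vnorm_ge0 _ _ a); pose proof (vnorm_ge0 _ _ b).
  rewrite (vnorm_eq0 _ _ a), (vnorm_eq0 _ _ b); auto; lra.
Qed.
Lemma ds_norm_scale a x : ds_norm (ds_scale a x) = sabs k a * ds_norm x.
Proof. unfold ds_norm, ds_scale; simpl; rewrite !vnorm_scale; ring. Qed.
Lemma ds_norm_triangle x y : ds_norm (ds_add x y) <= ds_norm x + ds_norm y.
Proof.
  unfold ds_norm, ds_add; simpl.
  pose proof (vnorm_triangle _ _ (fst x) (fst y));
  pose proof (vnorm_triangle _ _ (snd x) (snd y)); lra.
Qed.

Definition dsum : NormedSpace k :=
  Build_NormedSpace k (X * Y)%type (vzero X, vzero Y) ds_add ds_opp ds_scale ds_norm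
    ds_addA ds_addC ds_add0 ds_addN ds_scaleA ds_scale1 ds_scaleDr ds_scaleDl
    ds_norm_ge0 ds_norm_eq0 ds_norm_scale ds_norm_triangle.
End DSum.

Definition dsum_map {k} {X1 X3 : NormedSpace k} (T1 : X1 -> X1) (T3 : X3 -> X3)
  : dsum X1 X3 -> dsum X1 X3 :=
  fun z => (T1 (fst z), T3 (snd z)).

From Stdlib Require Import Reals Lra Lia ClassicalDescription ProofIrrelevance IndefiniteDescription.
Open Scope R_scope.

(* Since [||RL - I|| <= eps <= 1/2], [RL] is invertible by a Neumann series,
   with inverse [B] of norm at most 2.  Then [P = L B R] is a projection with
   range [L(Y1)] and kernel [Y3 = ker R], and [S y = (B R y, y - P y)] is an
   isomorphism onto [Y1 (+) Y3] with inverse [(x, z) |-> L x + z].  For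
   [T2 + K] to act as [T1 (+) T3] it suffices to take
   [K = (L T1 - T2 L) B R + L B (T1 R - R T2) (I - P)] and [T3 = (I - P) T2],
   and [K] is compact, resp. small, whenever the two intertwining defects are. *)


Definition sreal (k : scalar_kind) (r : R) : scal k :=
  match k as k0 return scal k0 with
  | RealScalars => r
  | ComplexScalars => (r, 0)
  end.

Lemma sabs_sreal k r : sabs k (sreal k r) = Rabs r.
Proof.
  destruct k; simpl; auto.
  replace (r * r + 0 * 0) with (Rsqr r) by (unfold Rsqr; ring).
  apply sqrt_Rsqr_abs.
Qed.

Lemma sadd_sreal k a b : sadd k (sreal k a) (sreal k b) = sreal k (a + b).
Proof. destruct k; simpl; auto; f_equal; ring. Qed.

Lemma smul_sreal k a b : smul k (sreal k a) (sreal k b) = sreal k (a * b).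
Proof. destruct k; simpl; auto; f_equal; ring. Qed.

Lemma sone_sreal k : sone k = sreal k 1.
Proof. destruct k; reflexivity. Qed.

Arguments vaddC {k n} x y.
Arguments vaddA {k n} x y z.
Arguments vadd0 {k n} x.
Arguments vaddN {k n} x.
Arguments vscale1 {k n} x.

Section VectorAlgebra.
Context {k : scalar_kind} {X : NormedSpace k}.
Implicit Types a b c d x y : X.

Lemma vadd0l x : vadd (vzero X) x = x.
Proof. rewrite vaddC; apply vadd0. Qed.

Lemma vaddNl x : vadd (vopp x) x = vzero X.
Proof. rewrite vaddC; apply vaddN. Qed.

Lemma vadd_cancel_l a b c : vadd a b = vadd a c -> b = c.
Proof.
  intro H.
  rewrite <- (vadd0l b), <- (vaddNl a), <- vaddA, H, vaddA, vaddNl, vadd0l; reflexivity.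
Qed.

Lemma vopp_unique a b : vadd a b = vzero X -> b = vopp a.
Proof. intro H; apply (vadd_cancel_l a); rewrite H, vaddN; reflexivity. Qed.

Lemma vsub_eq0 a b : vsub a b = vzero X -> a = b.
Proof.
  unfold vsub; intro H.
  rewrite <- (vadd0 a), <- (vaddNl b), vaddA, H, vadd0l; reflexivity.
Qed.

Lemma vsubvv a : vsub a a = vzero X.
Proof. apply vaddN. Qed.

Lemma vscale_sreal0 x : vscale (sreal k 0) x = vzero X.
Proof.
  apply (vadd_cancel_l (vscale (sreal k 0) x)).
  rewrite vadd0, <- vscaleDl, sadd_sreal, Rplus_0_r; reflexivity.
Qed.

Lemma vscale0 (s : scal k) : vscale s (vzero X) = vzero X.
Proof.
  apply (vadd_cancel_l (vscale s (vzero X))).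
  rewrite vadd0, <- vscaleDr, vadd0; reflexivity.
Qed.

Lemma vnorm0 : vnorm (vzero X) = 0.
Proof. rewrite <- (vscale_sreal0 (vzero X)), vnorm_scale, sabs_sreal, Rabs_R0; ring. Qed.

Lemma vopp_sreal x : vopp x = vscale (sreal k (-1)) x.
Proof.
  symmetry; apply vopp_unique.
  rewrite <- (vscale1 x) at 1; rewrite sone_sreal, <- vscaleDl, sadd_sreal.
  replace (1 + -1) with 0 by ring; apply vscale_sreal0.
Qed.

Lemma vnorm_opp x : vnorm (vopp x) = vnorm x.
Proof. rewrite vopp_sreal, vnorm_scale, sabs_sreal, Rabs_left by lra; ring. Qed.

Lemma vscaleN (s : scal k) x : vscale s (vopp x) = vopp (vscale s x).
Proof. apply vopp_unique; rewrite <- vscaleDr, vaddN; apply vscale0. Qed.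

Lemma vaddACA a b c d : vadd (vadd a b) (vadd c d) = vadd (vadd a c) (vadd b d).
Proof. rewrite <- !vaddA; f_equal; rewrite !vaddA; f_equal; apply vaddC. Qed.

Lemma voppD a b : vopp (vadd a b) = vadd (vopp a) (vopp b).
Proof. symmetry; apply vopp_unique; rewrite vaddACA, !vaddN; apply vadd0. Qed.

Lemma voppK a : vopp (vopp a) = a.
Proof. symmetry; apply vopp_unique; apply vaddNl. Qed.

Lemma vopp0 : vopp (vzero X) = vzero X.
Proof. symmetry; apply vopp_unique; apply vadd0. Qed.

Lemma vsubDD a b c d : vsub (vadd a b) (vadd c d) = vadd (vsub a c) (vsub b d).
Proof. unfold vsub; rewrite voppD; apply vaddACA. Qed.

Lemma vadd_subKC a b : vadd a (vsub b a) = b.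
Proof. unfold vsub; rewrite (vaddC b), vaddA, vaddN; apply vadd0l. Qed.

Lemma vsub_addKl a b : vsub (vadd a b) a = b.
Proof. unfold vsub; rewrite (vaddC a), <- vaddA, vaddN; apply vadd0. Qed.

Lemma vadd_subK a b : vadd (vsub a b) b = a.
Proof. unfold vsub; rewrite <- vaddA, vaddNl; apply vadd0. Qed.

Lemma vadd_sub_sub a b c : vadd (vsub a b) (vsub b c) = vsub a c.
Proof. unfold vsub; rewrite <- vaddA, (vaddA (vopp b)), vaddNl, vadd0l; reflexivity. Qed.

Lemma vsub_subl x a b : vsub (vsub x a) (vsub x b) = vsub b a.
Proof. unfold vsub; rewrite voppD, voppK, vaddACA, vaddN, vadd0l, vaddC; reflexivity. Qed.

Lemma vsub0 a : vsub a (vzero X) = a.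
Proof. unfold vsub; rewrite vopp0; apply vadd0. Qed.

Lemma vsub0l a : vsub (vzero X) a = vopp a.
Proof. apply vadd0l. Qed.

Lemma voppB a b : vopp (vsub a b) = vsub b a.
Proof. unfold vsub; rewrite voppD, voppK; apply vaddC. Qed.

Lemma vdist_sym a b : vnorm (vsub a b) = vnorm (vsub b a).
Proof. rewrite <- voppB, vnorm_opp; reflexivity. Qed.

Lemma vdist_triangle a b c : vnorm (vsub a c) <= vnorm (vsub a b) + vnorm (vsub b c).
Proof. rewrite <- (vadd_sub_sub a b c); apply vnorm_triangle. Qed.

Lemma vnorm_sub_le a b : vnorm (vsub a b) <= vnorm a + vnorm b.
Proof. unfold vsub; rewrite <- (vnorm_opp b); apply vnorm_triangle. Qed.

Lemma vnorm_le_sub a b : vnorm a <= vnorm (vsub a b) + vnorm b.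
Proof. rewrite <- (vadd_subK a b) at 1; apply vnorm_triangle. Qed.

Lemma vscaleBr (s : scal k) a b : vscale s (vsub a b) = vsub (vscale s a) (vscale s b).
Proof. unfold vsub; rewrite vscaleDr, vscaleN; reflexivity. Qed.

End VectorAlgebra.

Section Linear.
Context {k : scalar_kind}.

Lemma linear0 {X Y : NormedSpace k} (f : X -> Y) : is_linear f -> f (vzero X) = vzero Y.
Proof.
  intros [Ha _]; apply (vadd_cancel_l (f (vzero X))).
  rewrite <- Ha, !vadd0; reflexivity.
Qed.

Lemma linearN {X Y : NormedSpace k} (f : X -> Y) x : is_linear f -> f (vopp x) = vopp (f x).
Proof. intro Hl; apply vopp_unique; rewrite <- (proj1 Hl), vaddN; apply linear0, Hl. Qed.

Lemma linearB {X Y : NormedSpace k} (f : X -> Y) x y :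
  is_linear f -> f (vsub x y) = vsub (f x) (f y).
Proof. intro Hl; unfold vsub; rewrite (proj1 Hl), linearN; auto. Qed.

Lemma linear_comp {X Y Z : NormedSpace k} (f : X -> Y) (g : Y -> Z) :
  is_linear f -> is_linear g -> is_linear (fun x => g (f x)).
Proof. intros [fa fs] [ga gs]; split; intros; [rewrite fa, ga | rewrite fs, gs]; reflexivity. Qed.

Lemma linear_id {X : NormedSpace k} : is_linear (fun x : X => x).
Proof. split; reflexivity. Qed.

Lemma linear_sub {X Y : NormedSpace k} (f g : X -> Y) :
  is_linear f -> is_linear g -> is_linear (fun x => vsub (f x) (g x)).
Proof.
  intros [fa fs] [ga gs]; split; intros.
  - rewrite fa, ga; apply vsubDD.
  - rewrite fs, gs, vscaleBr; reflexivity.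
Qed.

Lemma linear_add {X Y : NormedSpace k} (f g : X -> Y) :
  is_linear f -> is_linear g -> is_linear (fun x => vadd (f x) (g x)).
Proof.
  intros [fa fs] [ga gs]; split; intros.
  - rewrite fa, ga; apply vaddACA.
  - rewrite fs, gs, vscaleDr; reflexivity.
Qed.

End Linear.

Section Bounds.
Context {k : scalar_kind}.

Definition bounded_by {X Y : NormedSpace k} (f : X -> Y) (M : R) :=
  0 <= M /\ forall x, vnorm (f x) <= M * vnorm x.

Lemma is_bounded_bounded_by {X Y : NormedSpace k} (f : X -> Y) :
  is_bounded f -> exists M, bounded_by f M.
Proof.
  intros [M HM]; exists (Rabs M); split; [apply Rabs_pos|].
  intro x; eapply Rle_trans; [apply HM|].
  apply Rmult_le_compat_r; [apply vnorm_ge0 | apply RRle_abs].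
Qed.

Lemma bounded_by_is_bounded {X Y : NormedSpace k} (f : X -> Y) M :
  bounded_by f M -> is_bounded f.
Proof. intros [_ H]; exists M; auto. Qed.

Lemma bounded_by_comp {X Y Z : NormedSpace k} (f : X -> Y) (g : Y -> Z) M N :
  bounded_by f M -> bounded_by g N -> bounded_by (fun x => g (f x)) (N * M).
Proof.
  intros [HM Hf] [HN Hg]; split; [apply Rmult_le_pos; auto|].
  intro x; eapply Rle_trans; [apply Hg|]; rewrite Rmult_assoc.
  apply Rmult_le_compat_l; auto.
Qed.

Lemma bounded_by_sub {X Y : NormedSpace k} (f g : X -> Y) M N :
  bounded_by f M -> bounded_by g N -> bounded_by (fun x => vsub (f x) (g x)) (M + N).
Proof.
  intros [HM Hf] [HN Hg]; split; [lra|].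
  intro x; eapply Rle_trans; [apply vnorm_sub_le|].
  specialize (Hf x); specialize (Hg x); lra.
Qed.

Lemma bounded_by_add {X Y : NormedSpace k} (f g : X -> Y) M N :
  bounded_by f M -> bounded_by g N -> bounded_by (fun x => vadd (f x) (g x)) (M + N).
Proof.
  intros [HM Hf] [HN Hg]; split; [lra|].
  intro x; eapply Rle_trans; [apply vnorm_triangle|].
  specialize (Hf x); specialize (Hg x); lra.
Qed.

Lemma bounded_by_id {X : NormedSpace k} : bounded_by (fun x : X => x) 1.
Proof. split; [lra | intro; lra]. Qed.

Lemma bounded_by_mono {X Y : NormedSpace k} (f : X -> Y) M N :
  bounded_by f M -> M <= N -> bounded_by f N.
Proof.
  intros [HM Hf] HMN; split; [lra|]; intro x; eapply Rle_trans; [apply Hf|].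
  apply Rmult_le_compat_r; auto; apply vnorm_ge0.
Qed.

Lemma opnorm_ge0 {X Y : NormedSpace k} (f : X -> Y) : 0 <= opnorm f.
Proof.
  unfold opnorm; destruct (excluded_middle_informative _) as [Hb|Hb]; [|lra].
  destruct (completeness _ Hb (opnorm_set_ne f)) as [m Hm]; simpl; destruct Hm as [Hub _].
  apply Hub; left; reflexivity.
Qed.

Lemma opnorm_le {X Y : NormedSpace k} (f : X -> Y) M : bounded_by f M -> opnorm f <= M.
Proof.
  intros [HM Hf].
  unfold opnorm; destruct (excluded_middle_informative _) as [Hb|Hb]; [|lra].
  destruct (completeness _ Hb (opnorm_set_ne f)) as [m Hm]; simpl; destruct Hm as [_ Hlub].
  apply Hlub; intros r [->|[x [Hx ->]]]; [lra|].
  eapply Rle_trans; [apply Hf|]; pose proof (vnorm_ge0 _ _ x); nra.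
Qed.

Lemma opnorm_bounded_by {X Y : NormedSpace k} (f : X -> Y) :
  is_operator f -> bounded_by f (opnorm f).
Proof.
  intros [Hl Hbd]; split; [apply opnorm_ge0|]; intro x.
  destruct (is_bounded_bounded_by f Hbd) as [M [HM Hf]].
  unfold opnorm; destruct (excluded_middle_informative _) as [Hb|Hb].
  2:{ exfalso; apply Hb; exists M; intros r [->|[y [Hy ->]]]; [lra|].
      eapply Rle_trans; [apply Hf|]; pose proof (vnorm_ge0 _ _ y); nra. }
  destruct (completeness _ Hb (opnorm_set_ne f)) as [m Hm]; simpl; destruct Hm as [Hub _].
  pose proof (vnorm_ge0 _ _ x) as Hx0.
  destruct (Req_dec (vnorm x) 0) as [Hx|Hx].
  { rewrite (vnorm_eq0 _ _ x Hx), linear0, vnorm0; auto; rewrite vnorm0; lra. }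
  set (n := vnorm x) in *.
  assert (Hn : 0 < / n) by (apply Rinv_0_lt_compat; lra).
  assert (H1 : vnorm (f (vscale (sreal k (/ n)) x)) <= m).
  { apply Hub; right; exists (vscale (sreal k (/ n)) x); split; auto.
    rewrite vnorm_scale, sabs_sreal, Rabs_right by lra; fold n; field_simplify; lra. }
  rewrite (proj2 Hl), vnorm_scale, sabs_sreal, Rabs_right in H1 by lra.
  apply (Rmult_le_compat_r n) in H1; [|lra].
  replace (/ n * vnorm (f x) * n) with (vnorm (f x)) in H1 by (field; lra).
  lra.
Qed.

Lemma bounded_by_opnorm {X Y : NormedSpace k} (f : X -> Y) M :
  is_operator f -> opnorm f <= M -> bounded_by f M.
Proof. intros Hf HM; eapply bounded_by_mono; [apply opnorm_bounded_by|]; auto. Qed.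

Lemma operator_comp {X Y Z : NormedSpace k} (f : X -> Y) (g : Y -> Z) :
  is_operator f -> is_operator g -> is_operator (fun x => g (f x)).
Proof.
  intros [fl fb] [gl gb]; split; [apply linear_comp; auto|].
  destruct (is_bounded_bounded_by _ fb) as [M HM], (is_bounded_bounded_by _ gb) as [N HN].
  eapply bounded_by_is_bounded; apply bounded_by_comp; eauto.
Qed.

Lemma operator_sub {X Y : NormedSpace k} (f g : X -> Y) :
  is_operator f -> is_operator g -> is_operator (fun x => vsub (f x) (g x)).
Proof.
  intros [fl fb] [gl gb]; split; [apply linear_sub; auto|].
  destruct (is_bounded_bounded_by _ fb) as [M HM], (is_bounded_bounded_by _ gb) as [N HN].
  eapply bounded_by_is_bounded; apply bounded_by_sub; eauto.
Qed.

Lemma operator_add {X Y : NormedSpace k} (f g : X -> Y) :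
  is_operator f -> is_operator g -> is_operator (fun x => vadd (f x) (g x)).
Proof.
  intros [fl fb] [gl gb]; split; [apply linear_add; auto|].
  destruct (is_bounded_bounded_by _ fb) as [M HM], (is_bounded_bounded_by _ gb) as [N HN].
  eapply bounded_by_is_bounded; apply bounded_by_add; eauto.
Qed.

Lemma operator_id {X : NormedSpace k} : is_operator (fun x : X => x).
Proof. split; [apply linear_id | eapply bounded_by_is_bounded; apply bounded_by_id]. Qed.

End Bounds.

Definition strict_incr (phi : nat -> nat) := forall n, (phi n < phi (S n))%nat.

Lemma strict_incr_ge phi : strict_incr phi -> forall n, (n <= phi n)%nat.
Proof. intros H n; induction n; [lia | specialize (H n); lia]. Qed.

Lemma strict_incr_lt phi : strict_incr phi -> forall n m, (n < m)%nat -> (phi n < phi m)%nat.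
Proof.
  intros H n m Hnm; induction m; [lia|].
  destruct (Nat.eq_dec n m) as [->|]; [apply H|].
  specialize (H m); assert (phi n < phi m)%nat by (apply IHm; lia); lia.
Qed.

Lemma strict_incr_comp phi psi :
  strict_incr phi -> strict_incr psi -> strict_incr (fun n => phi (psi n)).
Proof. intros H1 H2 n; apply strict_incr_lt; auto. Qed.

Lemma converges_to_subseq {k} {X : NormedSpace k} (u : nat -> X) l psi :
  converges_to u l -> strict_incr psi -> converges_to (fun n => u (psi n)) l.
Proof.
  intros Hc Hp e He; destruct (Hc e He) as [N HN]; exists N; intros n Hn.
  apply HN; pose proof (strict_incr_ge psi Hp n); lia.
Qed.

Section Compactness.
Context {k : scalar_kind}.

(* [compact_op] only tests sequences in the unit ball; this variant allows any
   norm bound, which is what stays stable under composition. *)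
Definition compact_on_bounded {X Y : NormedSpace k} (f : X -> Y) : Prop :=
  forall (M : R) (x : nat -> X), (forall n, vnorm (x n) <= M) ->
    exists phi, strict_incr phi /\ exists l, converges_to (fun n => f (x (phi n))) l.

Lemma compact_on_bounded_compact_op {X Y : NormedSpace k} (f : X -> Y) :
  compact_on_bounded f -> compact_op f.
Proof. intros H x Hx; apply (H 1 x Hx). Qed.

Lemma compact_op_on_bounded {X Y : NormedSpace k} (f : X -> Y) :
  is_linear f -> compact_op f -> compact_on_bounded f.
Proof.
  intros Hl Hc M x Hx.
  set (c := Rabs M + 1).
  assert (Hc0 : 0 < c) by (unfold c; pose proof (Rabs_pos M); lra).
  assert (HMc : M < c) by (unfold c; pose proof (RRle_abs M); lra).
  assert (Hic : 0 < / c) by (apply Rinv_0_lt_compat; auto).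
  destruct (Hc (fun n => vscale (sreal k (/ c)) (x n))) as [phi [Hp [l Hlim]]].
  { intro n; rewrite vnorm_scale, sabs_sreal, Rabs_right by lra.
    specialize (Hx n); apply (Rmult_le_reg_l c); auto.
    rewrite <- Rmult_assoc, Rinv_r by lra; lra. }
  exists phi; split; auto; exists (vscale (sreal k c) l).
  intros e He.
  destruct (Hlim (e / c)) as [N HN]; [apply Rdiv_lt_0_compat; auto|].
  exists N; intros n Hn; specialize (HN n Hn); simpl in HN.
  rewrite (proj2 Hl) in HN.
  replace (f (x (phi n))) with (vscale (sreal k c) (vscale (sreal k (/ c)) (f (x (phi n))))).
  2:{ rewrite vscaleA, smul_sreal, Rinv_r, <- sone_sreal, vscale1 by lra; reflexivity. }
  rewrite <- vscaleBr, vnorm_scale, sabs_sreal, Rabs_right by lra.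
  apply (Rmult_lt_compat_l c) in HN; auto.
  replace (c * (e / c)) with e in HN by (field; lra); auto.
Qed.

Lemma compact_on_bounded_comp_r {X Y Z : NormedSpace k} (g : X -> Y) (c : Y -> Z) G :
  compact_on_bounded c -> bounded_by g G -> compact_on_bounded (fun x => c (g x)).
Proof.
  intros Hc [HG Hg] M x Hx.
  destruct (Hc (G * M) (fun n => g (x n))) as [phi [Hp [l Hl]]].
  { intro n; eapply Rle_trans; [apply Hg|]; apply Rmult_le_compat_l; auto. }
  exists phi; split; auto; exists l; auto.
Qed.

Lemma compact_on_bounded_comp_l {X Y Z : NormedSpace k} (c : X -> Y) (f : Y -> Z) :
  compact_on_bounded c -> is_operator f -> compact_on_bounded (fun x => f (c x)).
Proof.
  intros Hc Hf M x Hx.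
  destruct (Hc M x Hx) as [phi [Hp [l Hl]]].
  exists phi; split; auto; exists (f l).
  destruct (opnorm_bounded_by f Hf) as [Ha Hb]; set (a := opnorm f) in *.
  intros e He.
  destruct (Hl (e / (a + 1))) as [N HN]; [apply Rdiv_lt_0_compat; lra|].
  exists N; intros n Hn; specialize (HN n Hn); simpl in *.
  rewrite <- linearB by apply Hf.
  eapply Rle_lt_trans; [apply Hb|].
  assert (a * (e / (a + 1)) < e).
  { apply (Rmult_lt_reg_r (a + 1)); [lra|].
    replace (a * (e / (a + 1)) * (a + 1)) with (a * e) by (field; lra); nra. }
  pose proof (vnorm_ge0 _ _ (vsub (c (x (phi n))) l)); nra.
Qed.

Lemma compact_on_bounded_add {X Y : NormedSpace k} (f g : X -> Y) :
  compact_on_bounded f -> compact_on_bounded g ->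
  compact_on_bounded (fun x => vadd (f x) (g x)).
Proof.
  intros Hf Hg M x Hx.
  destruct (Hf M x Hx) as [phi1 [Hp1 [l1 Hl1]]].
  destruct (Hg M (fun n => x (phi1 n))) as [phi2 [Hp2 [l2 Hl2]]]; [intro; apply Hx|].
  exists (fun n => phi1 (phi2 n)); split; [apply strict_incr_comp; auto|].
  exists (vadd l1 l2).
  pose proof (converges_to_subseq _ _ _ Hl1 Hp2) as H1.
  intros e He.
  destruct (H1 (e / 2)) as [N1 HN1]; [lra|]; destruct (Hl2 (e / 2)) as [N2 HN2]; [lra|].
  exists (N1 + N2)%nat; intros n Hn.
  specialize (HN1 n ltac:(lia)); specialize (HN2 n ltac:(lia)); simpl in *.
  rewrite vsubDD; eapply Rle_lt_trans; [apply vnorm_triangle|]; lra.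
Qed.

End Compactness.

Section NearIdentity.
Context {k : scalar_kind} {X : NormedSpace k}.

Lemma geometric_cauchy (u : nat -> X) C q :
  0 <= q < 1 -> (forall n, vnorm (vsub (u (S n)) (u n)) <= C * q ^ n) -> cauchy_seq u.
Proof.
  intros Hq Hu.
  assert (HC : 0 <= C).
  { specialize (Hu O); simpl in Hu; pose proof (vnorm_ge0 _ _ (vsub (u 1%nat) (u O))); lra. }
  (* the telescoping bound, multiplied through by [1 - q] to avoid division *)
  assert (Htail : forall n j,
            vnorm (vsub (u (n + j)%nat) (u n)) * (1 - q) <= C * (q ^ n - q ^ (n + j))).
  { intros n j; induction j.
    - rewrite Nat.add_0_r, vsubvv, vnorm0; lra.
    - rewrite Nat.add_succ_r.
      pose proof (vdist_triangle (u (S (n + j))) (u (n + j)%nat) (u n)) as Htri.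
      specialize (Hu (n + j)%nat); simpl pow.
      apply (Rmult_le_compat_r (1 - q)) in Htri; [|lra].
      apply (Rmult_le_compat_r (1 - q)) in Hu; [|lra].
      nra. }
  assert (Hbound : forall n m, (n <= m)%nat ->
            vnorm (vsub (u m) (u n)) * (1 - q) <= C * q ^ n).
  { intros n m Hnm; replace m with (n + (m - n))%nat by lia.
    eapply Rle_trans; [apply Htail|].
    pose proof (pow_le q (n + (m - n)) (proj1 Hq)); nra. }
  intros e He.
  destruct (pow_lt_1_zero q ltac:(rewrite Rabs_right; lra) (e * (1 - q) / (C + 1)))
    as [N HN].
  { apply Rdiv_lt_0_compat; nra. }
  assert (Hsmall : forall n, (N <= n)%nat -> C * q ^ n < e * (1 - q)).
  { intros n Hn; specialize (HN n Hn).
    pose proof (pow_le q n (proj1 Hq)).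
    rewrite Rabs_right in HN by lra.
    apply (Rmult_lt_compat_l (C + 1)) in HN; [|lra].
    replace ((C + 1) * (e * (1 - q) / (C + 1))) with (e * (1 - q)) in HN by (field; lra).
    nra. }
  exists N; intros m n Hm Hn.
  destruct (Nat.le_ge_cases n m) as [Hnm|Hmn].
  - specialize (Hbound n m Hnm); specialize (Hsmall n Hn); nra.
  - rewrite vdist_sym; specialize (Hbound m n Hmn); specialize (Hsmall m Hm); nra.
Qed.

Variables (A : X -> X) (e : R).
Hypotheses (HA : is_linear A) (He : 0 <= e < 1)
  (Hnear : forall y, vnorm (vsub (A y) y) <= e * vnorm y).

Lemma near_identity_lower_bound y : (1 - e) * vnorm y <= vnorm (A y).
Proof.
  pose proof (vnorm_le_sub y (A y)); rewrite vdist_sym in H.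
  pose proof (Hnear y); lra.
Qed.

Lemma near_identity_injective u v : A u = A v -> u = v.
Proof.
  intro Huv; apply vsub_eq0, vnorm_eq0.
  pose proof (near_identity_lower_bound (vsub u v)) as Hlow.
  rewrite linearB, Huv, vsubvv, vnorm0 in Hlow by auto.
  pose proof (vnorm_ge0 _ _ (vsub u v)); nra.
Qed.

(* Picard iteration for [y = x - (A - I) y], i.e. the Neumann series of [A]. *)
Lemma near_identity_surjective : complete X -> forall x, exists l, A l = x.
Proof.
  intros Hc x.
  set (F := fun y => vsub (A y) y).
  assert (HF : is_linear F) by (apply linear_sub; [auto | apply linear_id]).
  set (u := fun n => Nat.iter n (fun y => vsub x (F y)) (vzero X)).
  assert (Hstep : forall n, vsub (u (S (S n))) (u (S n)) = F (vsub (u n) (u (S n)))).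
  { intro n; unfold u; simpl; rewrite vsub_subl; symmetry; apply linearB, HF. }
  assert (Hinc : forall n, vnorm (vsub (u (S n)) (u n)) <= vnorm x * e ^ n).
  { induction n.
    - unfold u; simpl; rewrite (linear0 F), !vsub0; auto; lra.
    - rewrite Hstep; eapply Rle_trans; [apply Hnear|].
      rewrite vdist_sym; simpl pow; nra. }
  destruct (Hc u (geometric_cauchy u _ e ltac:(lra) Hinc)) as [l Hl].
  assert (Hfix : l = vsub x (F l)).
  { apply vsub_eq0, vnorm_eq0, Rle_antisym; [|apply vnorm_ge0].
    apply Rle_plus_epsilon; intros eps Heps.
    destruct (Hl (eps / 2)) as [N HN]; [lra|].
    eapply Rle_trans; [apply (vdist_triangle _ (u (S N)))|].
    assert (E : vsub (u (S N)) (vsub x (F l)) = F (vsub l (u N))).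
    { unfold u; simpl; rewrite vsub_subl; symmetry; apply linearB, HF. }
    rewrite E, vdist_sym.
    pose proof (HN (S N) ltac:(lia)); pose proof (HN N ltac:(lia)).
    pose proof (Hnear (vsub l (u N))); rewrite vdist_sym in H0.
    pose proof (vnorm_ge0 _ _ (vsub l (u N))); fold (F (vsub l (u N))) in H1; nra. }
  exists l; rewrite <- (vadd_subK (A l) l); fold (F l).
  rewrite Hfix at 2; apply vadd_subKC.
Qed.

Lemma near_identity_inverse : complete X ->
  exists B : X -> X, is_linear B /\ bounded_by B (/ (1 - e)) /\
    (forall x, A (B x) = x) /\ (forall y, B (A y) = y).
Proof.
  intro Hc.
  pose proof (near_identity_surjective Hc) as Hs.
  set (B := fun x => proj1_sig (constructive_indefinite_description _ (Hs x))).
  assert (HAB : forall x, A (B x) = x).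
  { intro x; unfold B; destruct (constructive_indefinite_description _ (Hs x)); auto. }
  assert (HBA : forall y, B (A y) = y)
    by (intro y; apply near_identity_injective; rewrite HAB; auto).
  exists B; repeat split; auto.
  - intros x y; apply near_identity_injective; rewrite (proj1 HA), !HAB; auto.
  - intros s x; apply near_identity_injective; rewrite (proj2 HA), !HAB; auto.
  - left; apply Rinv_0_lt_compat; lra.
  - intro x; pose proof (near_identity_lower_bound (B x)) as Hlow; rewrite HAB in Hlow.
    apply (Rmult_le_reg_l (1 - e)); [lra|].
    rewrite <- Rmult_assoc, Rinv_r by lra; lra.
Qed.

End NearIdentity.

Section Kernel.
Context {k : scalar_kind} {X Y : NormedSpace k} (T : X -> Y) (HT : is_linear T).

Definition kernel := {x : X | T x = vzero Y}.

Lemma kernel_eq (a b : kernel) : proj1_sig a = proj1_sig b -> a = b.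
Proof. destruct a, b; simpl; intros ->; f_equal; apply proof_irrelevance. Qed.

Lemma kernel_add_subproof (a b : kernel) : T (vadd (proj1_sig a) (proj1_sig b)) = vzero Y.
Proof. destruct a as [a Ha], b as [b Hb]; simpl; rewrite (proj1 HT), Ha, Hb; apply vadd0. Qed.

Lemma kernel_opp_subproof (a : kernel) : T (vopp (proj1_sig a)) = vzero Y.
Proof. destruct a as [a Ha]; simpl; rewrite linearN, Ha; auto; apply vopp0. Qed.

Lemma kernel_scale_subproof s (a : kernel) : T (vscale s (proj1_sig a)) = vzero Y.
Proof. destruct a as [a Ha]; simpl; rewrite (proj2 HT), Ha; apply vscale0. Qed.

Definition kernel_space : NormedSpace k.
Proof.
  refine (Build_NormedSpace k kernel
            (exist _ (vzero X) (linear0 T HT))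
            (fun a b => exist _ _ (kernel_add_subproof a b))
            (fun a => exist _ _ (kernel_opp_subproof a))
            (fun s a => exist _ _ (kernel_scale_subproof s a))
            (fun a => vnorm (proj1_sig a)) _ _ _ _ _ _ _ _ _ _ _ _);
  intros; try (apply kernel_eq; simpl); simpl in *.
  - apply vaddA.
  - apply vaddC.
  - apply vadd0.
  - apply vaddN.
  - apply vscaleA.
  - apply vscale1.
  - apply vscaleDr.
  - apply vscaleDl.
  - apply vnorm_ge0.
  - apply vnorm_eq0; auto.
  - apply vnorm_scale.
  - apply vnorm_triangle.
Defined.

(* The kernel of a bounded operator is closed. *)
Lemma kernel_space_complete M : complete X -> bounded_by T M -> complete kernel_space.
Proof.
  intros Hc [HM HRM] u Hu.
  destruct (Hc (fun n => proj1_sig (u n))) as [l Hlim].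
  { intros e He; destruct (Hu e He) as [N HN]; exists N; intros; apply HN; auto. }
  assert (Hl0 : T l = vzero Y).
  { apply vnorm_eq0, Rle_antisym; [|apply vnorm_ge0].
    apply Rle_plus_epsilon; intros e He.
    destruct (Hlim (e / (M + 1))) as [N HN]; [apply Rdiv_lt_0_compat; lra|].
    specialize (HN N (le_n _)).
    specialize (HRM (vsub (proj1_sig (u N)) l)).
    rewrite linearB, (proj2_sig (u N)), vsub0l, vnorm_opp in HRM by auto.
    assert (M * (e / (M + 1)) <= e).
    { apply (Rmult_le_reg_r (M + 1)); [lra|].
      replace (M * (e / (M + 1)) * (M + 1)) with (M * e) by (field; lra); nra. }
    pose proof (vnorm_ge0 _ _ (vsub (proj1_sig (u N)) l)); nra. }
  exists (exist _ l Hl0); intros e He; destruct (Hlim e He) as [N HN]; exists N; auto.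
Qed.

Lemma linear_kernel_incl : is_linear (fun z : kernel_space => proj1_sig z).
Proof. split; reflexivity. Qed.

Lemma bounded_by_kernel_incl : bounded_by (fun z : kernel_space => proj1_sig z) 1.
Proof. split; [lra | intro; simpl; lra]. Qed.

Definition ker_corestrict {Z : NormedSpace k} (f : Z -> X) (Hf : forall z, T (f z) = vzero Y)
  : Z -> kernel_space := fun z => exist _ (f z) (Hf z).

Lemma linear_ker_corestrict {Z : NormedSpace k} (f : Z -> X) Hf :
  is_linear f -> is_linear (ker_corestrict f Hf).
Proof. intros [fa fs]; split; intros; apply kernel_eq; simpl; auto. Qed.

Lemma bounded_by_ker_corestrict {Z : NormedSpace k} (f : Z -> X) Hf M :
  bounded_by f M -> bounded_by (ker_corestrict f Hf) M.
Proof. auto. Qed.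

End Kernel.

Section DirectSumMaps.
Context {k : scalar_kind} {X Y Z : NormedSpace k}.

Lemma linear_pair (f : Z -> X) (g : Z -> Y) :
  is_linear f -> is_linear g -> is_linear (fun z => (f z, g z) : dsum X Y).
Proof.
  intros [fa fs] [ga gs]; split; intros; simpl; unfold ds_add, ds_scale; simpl; f_equal; auto.
Qed.

Lemma bounded_by_pair (f : Z -> X) (g : Z -> Y) M N :
  bounded_by f M -> bounded_by g N -> bounded_by (fun z => (f z, g z) : dsum X Y) (M + N).
Proof.
  intros [HM Hf] [HN Hg]; split; [lra|]; intro z; simpl; unfold ds_norm; simpl.
  specialize (Hf z); specialize (Hg z); lra.
Qed.

Lemma linear_copair (f : X -> Z) (g : Y -> Z) :
  is_linear f -> is_linear g -> is_linear (fun p : dsum X Y => vadd (f (fst p)) (g (snd p))).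
Proof.
  intros [fa fs] [ga gs]; split; intros; simpl; unfold ds_add, ds_scale; simpl.
  - rewrite fa, ga; apply vaddACA.
  - rewrite fs, gs, vscaleDr; reflexivity.
Qed.

Lemma bounded_by_copair (f : X -> Z) (g : Y -> Z) M N :
  bounded_by f M -> bounded_by g N ->
  bounded_by (fun p : dsum X Y => vadd (f (fst p)) (g (snd p))) (Rmax M N).
Proof.
  intros [HM Hf] [HN Hg]; split; [apply (Rle_trans _ M); [lra | apply Rmax_l]|].
  intros [x y]; simpl; unfold ds_norm; simpl.
  eapply Rle_trans; [apply vnorm_triangle|].
  specialize (Hf x); specialize (Hg y).
  pose proof (Rmax_l M N); pose proof (Rmax_r M N).
  pose proof (vnorm_ge0 _ _ x); pose proof (vnorm_ge0 _ _ y); nra.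
Qed.

End DirectSumMaps.

Section Decomposition.
Context {k : scalar_kind} {Y1 Y2 : NormedSpace k}.
Variables (L : Y1 -> Y2) (Rm : Y2 -> Y1) (B : Y1 -> Y1) (beta b : R).
Hypotheses (HL : is_operator L) (HR : is_operator Rm) (HB : is_operator B)
  (HRLB : forall x, Rm (L (B x)) = x) (HBRL : forall y, B (Rm (L y)) = y)
  (bL : bounded_by L beta) (bR : bounded_by Rm beta) (bB : bounded_by B b).

(* [B] inverts [Rm L], so [Y2 = L(Y1) (+) ker Rm] with [proj_ker] the projection
   onto the second summand. *)
Definition proj_ker (v : Y2) : Y2 := vsub v (L (B (Rm v))).

Lemma Rm_proj_ker v : Rm (proj_ker v) = vzero Y1.
Proof. unfold proj_ker; rewrite linearB, HRLB by apply HR; apply vsubvv. Qed.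

Lemma B_Rm_range_ker x z : Rm z = vzero Y1 -> B (Rm (vadd (L x) z)) = x.
Proof. intro Hz; rewrite (proj1 (proj1 HR)), Hz, vadd0; apply HBRL. Qed.

Lemma proj_ker_range_ker x z : Rm z = vzero Y1 -> proj_ker (vadd (L x) z) = z.
Proof. intro Hz; unfold proj_ker; rewrite B_Rm_range_ker by auto; apply vsub_addKl. Qed.

Lemma operator_proj_ker : is_operator proj_ker.
Proof.
  apply operator_sub; [apply operator_id|].
  apply (operator_comp (fun v => B (Rm v)) L), HL; apply operator_comp; auto.
Qed.

Lemma bounded_by_proj_ker : bounded_by proj_ker (1 + beta * (b * beta)).
Proof.
  apply bounded_by_sub; [apply bounded_by_id|].
  apply (bounded_by_comp (fun v => B (Rm v)) L), bL; apply bounded_by_comp; auto.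
Qed.

Definition Y3 := kernel_space Rm (proj1 HR).

Definition to_dsum (y : Y2) : dsum Y1 Y3 :=
  (B (Rm y), ker_corestrict Rm (proj1 HR) proj_ker Rm_proj_ker y).

Definition of_dsum (z : dsum Y1 Y3) : Y2 := vadd (L (fst z)) (proj1_sig (snd z)).

Lemma of_to_dsum y : of_dsum (to_dsum y) = y.
Proof. apply vadd_subKC. Qed.

Lemma to_of_dsum z : to_dsum (of_dsum z) = z.
Proof.
  destruct z as [x [z Hz]]; unfold to_dsum, of_dsum; simpl; f_equal.
  - apply B_Rm_range_ker; auto.
  - apply kernel_eq; simpl; apply proj_ker_range_ker; auto.
Qed.

Lemma operator_to_dsum : is_operator to_dsum.
Proof.
  destruct (is_bounded_bounded_by _ (proj2 (operator_comp Rm B HR HB))) as [M HM].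
  destruct (is_bounded_bounded_by _ (proj2 operator_proj_ker)) as [P HP].
  split; [|eapply bounded_by_is_bounded, bounded_by_pair; [apply HM | apply HP]].
  apply linear_pair; [apply linear_comp; [apply HR | apply HB]|].
  apply linear_ker_corestrict, operator_proj_ker.
Qed.

Lemma opnorm_to_dsum : opnorm to_dsum <= b * beta + (1 + beta * (b * beta)).
Proof.
  apply opnorm_le, bounded_by_pair; [apply bounded_by_comp; auto | apply bounded_by_proj_ker].
Qed.

Lemma bounded_by_of_dsum : bounded_by of_dsum (Rmax beta 1).
Proof. apply bounded_by_copair; [apply bL | apply bounded_by_kernel_incl]. Qed.

Lemma operator_of_dsum : is_operator of_dsum.
Proof.
  destruct (is_bounded_bounded_by _ (proj2 HL)) as [M HM].
  split; [apply linear_copair; [apply HL | apply linear_kernel_incl]|].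
  eapply bounded_by_is_bounded, bounded_by_copair; [apply HM | apply bounded_by_kernel_incl].
Qed.

Section Perturbation.
Variables (T1 : Y1 -> Y1) (T2 : Y2 -> Y2).
Hypotheses (HT1 : is_operator T1) (HT2 : is_operator T2).

Definition defect_L (y : Y1) : Y2 := vsub (L (T1 y)) (T2 (L y)).
Definition defect_R (y : Y2) : Y1 := vsub (T1 (Rm y)) (Rm (T2 y)).

Definition compression : Y3 -> Y3 :=
  ker_corestrict Rm (proj1 HR) (fun z : Y3 => proj_ker (T2 (proj1_sig z))) (fun z => Rm_proj_ker _).

Definition perturbation (w : Y2) : Y2 :=
  vadd (defect_L (B (Rm w))) (L (B (defect_R (proj_ker w)))).

Lemma operator_defect_L : is_operator defect_L.
Proof. apply operator_sub; apply operator_comp; auto. Qed.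

Lemma operator_defect_R : is_operator defect_R.
Proof. apply operator_sub; apply operator_comp; auto. Qed.

Lemma operator_compression : is_operator compression.
Proof.
  destruct (is_bounded_bounded_by _ (proj2 HT2)) as [M HM].
  destruct (is_bounded_bounded_by _ (proj2 operator_proj_ker)) as [P HP].
  split.
  - apply linear_ker_corestrict, linear_comp; [apply linear_comp|];
      [apply linear_kernel_incl | apply HT2 | apply operator_proj_ker].
  - eapply bounded_by_is_bounded, bounded_by_ker_corestrict.
    apply bounded_by_comp; [apply bounded_by_comp|];
      [apply bounded_by_kernel_incl | apply HM | apply HP].
Qed.

Lemma operator_perturbation : is_operator perturbation.
Proof.
  apply operator_add.
  - apply (operator_comp (fun w => B (Rm w))); [apply operator_comp|]; auto.
    apply operator_defect_L.
  - apply (operator_comp (fun w => B (defect_R (proj_ker w))) L), HL.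
    apply (operator_comp (fun w => defect_R (proj_ker w))), HB.
    apply operator_comp; [apply operator_proj_ker | apply operator_defect_R].
Qed.

Lemma compact_perturbation : compact_op defect_L -> compact_op defect_R ->
  compact_op perturbation.
Proof.
  intros HC1 HC2.
  destruct (is_bounded_bounded_by _ (proj2 (operator_comp Rm B HR HB))) as [M HM].
  destruct (is_bounded_bounded_by _ (proj2 operator_proj_ker)) as [P HP].
  apply compact_on_bounded_compact_op, compact_on_bounded_add.
  - apply (compact_on_bounded_comp_r (fun w => B (Rm w)) _ M), HM.
    apply compact_op_on_bounded; [apply operator_defect_L | apply HC1].
  - apply (compact_on_bounded_comp_l (fun w => defect_R (proj_ker w)) (fun v => L (B v))).
    + apply (compact_on_bounded_comp_r proj_ker _ P), HP.
      apply compact_op_on_bounded; [apply operator_defect_R | apply HC2].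
    + apply operator_comp; auto.
Qed.

Lemma bounded_by_perturbation c1 c2 :
  bounded_by defect_L c1 -> bounded_by defect_R c2 ->
  bounded_by perturbation (c1 * (b * beta) + beta * (b * (c2 * (1 + beta * (b * beta))))).
Proof.
  intros b1 b2; apply bounded_by_add.
  - apply (bounded_by_comp (fun w => B (Rm w))); [apply bounded_by_comp|]; auto.
  - apply (bounded_by_comp (fun w => B (defect_R (proj_ker w))) L), bL.
    apply (bounded_by_comp (fun w => defect_R (proj_ker w))), bB.
    apply bounded_by_comp; [apply bounded_by_proj_ker | apply b2].
Qed.

(* On [L x + z] with [z] in [ker Rm], the perturbation trades [T2 (L x)] for
   [L (T1 x)] and [T2 z] for its projection onto [ker Rm]. *)
Lemma to_dsum_perturbed z :
  to_dsum (vadd (T2 (of_dsum z)) (perturbation (of_dsum z))) = dsum_map T1 compression z.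
Proof.
  rewrite <- (to_of_dsum (dsum_map T1 compression z)); f_equal.
  destruct z as [x [z Hz]]; unfold of_dsum, perturbation, defect_L, defect_R; simpl.
  rewrite B_Rm_range_ker, proj_ker_range_ker by auto.
  rewrite Hz, (linear0 T1), vsub0l, (linearN B), (linearN L), (proj1 (proj1 HT2))
    by (apply HT1 || apply HB || apply HL).
  rewrite vaddACA, vadd_subKC; reflexivity.
Qed.

End Perturbation.
End Decomposition.

Lemma condition_number_le beta : 1 <= beta ->
  (2 * beta + (1 + beta * (2 * beta))) * Rmax beta 1 <= 7 * beta ^ 6.
Proof.
  intro Hb; rewrite Rmax_left by lra.
  assert (H3 : 1 <= beta ^ 3) by (rewrite <- (pow1 3); apply pow_incr; lra).
  replace (beta ^ 6) with (beta ^ 3 * beta ^ 3) by ring.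
  simpl in *; nra.
Qed.

Lemma perturbation_constant_limit c : 0 < c ->
  forall eta, 0 < eta -> exists delta, 0 < delta /\
    forall t, 0 < t < 1 / 2 -> t < delta -> c * t < eta.
Proof.
  intros Hc eta Heta; exists (eta / c); split; [apply Rdiv_lt_0_compat; auto|].
  intros t _ Ht; apply (Rmult_lt_compat_l c) in Ht; auto.
  replace (c * (eta / c)) with eta in Ht by (field; lra); auto.
Qed.

Theorem lemma3p10 (k : scalar_kind) (beta : R) (Hbeta : 1 <= beta) :
  exists (eps0 : R) (g : R -> R),
    0 < eps0 /\
    (forall t, 0 < t < eps0 -> 0 < g t) /\
    (forall eta, 0 < eta -> exists delta, 0 < delta /\
        forall t, 0 < t < eps0 -> t < delta -> g t < eta) /\
    forall (Y1 Y2 : NormedSpace k), complete Y1 -> complete Y2 ->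
    forall eps : R, 0 < eps < eps0 ->
    forall (L : Y1 -> Y2) (Rm : Y2 -> Y1),
      is_operator L -> is_operator Rm ->
      compact_op (fun y : Y1 => vsub (Rm (L y)) y) ->
      opnorm (fun y : Y1 => vsub (Rm (L y)) y) <= eps ->
      opnorm L <= beta -> opnorm Rm <= beta ->
      exists (Y3 : NormedSpace k) (S : Y2 -> dsum Y1 Y3) (Sinv : dsum Y1 Y3 -> Y2),
        complete Y3 /\ is_operator S /\ is_operator Sinv /\
        (forall y, Sinv (S y) = y) /\ (forall z, S (Sinv z) = z) /\
        opnorm S * opnorm Sinv <= 7 * beta ^ 6 /\
        forall (T1 : Y1 -> Y1) (T2 : Y2 -> Y2),
          is_operator T1 -> is_operator T2 ->
          compact_op (fun y : Y1 => vsub (L (T1 y)) (T2 (L y))) ->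
          compact_op (fun y : Y2 => vsub (T1 (Rm y)) (Rm (T2 y))) ->
          exists (K : Y2 -> Y2) (T3 : Y3 -> Y3),
            is_operator K /\ compact_op K /\ is_operator T3 /\
            (forall z : dsum Y1 Y3, S (vadd (T2 (Sinv z)) (K (Sinv z))) = dsum_map T1 T3 z) /\
            (opnorm (fun y : Y1 => vsub (L (T1 y)) (T2 (L y))) <= eps ->
             opnorm (fun y : Y2 => vsub (T1 (Rm y)) (Rm (T2 y))) <= eps ->
             opnorm K <= g eps * (opnorm T2 + 1)).
Proof.
  set (c := 2 * beta + beta * (2 * (1 + beta * (2 * beta)))).
  assert (Hc : 0 < c) by (unfold c; nra).
  exists (1 / 2), (fun t => c * t); split; [lra|]; split; [intros; nra|].
  split; [apply perturbation_constant_limit, Hc|].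
  intros Y1 Y2 HY1 HY2 eps Heps L Rm HL HR _ HRL HLb HRb.
  assert (bL : bounded_by L beta) by (apply bounded_by_opnorm; auto).
  assert (bR : bounded_by Rm beta) by (apply bounded_by_opnorm; auto).
  destruct (near_identity_inverse (fun y => Rm (L y)) eps
              (linear_comp _ _ (proj1 HL) (proj1 HR)) ltac:(lra)
              (proj2 (bounded_by_opnorm _ _ (operator_sub _ _ (operator_comp _ _ HL HR)
                                                  operator_id) HRL)) HY1)
    as [B [HBlin [bB0 [HRLB HBRL]]]].
  assert (bB : bounded_by B 2) by (apply (bounded_by_mono _ _ _ bB0);
    apply (Rmult_le_reg_l (1 - eps)); [lra|]; rewrite Rinv_r; lra).
  assert (HB : is_operator B) by (split; [|eapply bounded_by_is_bounded]; eauto).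
  exists (Y3 Rm HR), (to_dsum L Rm B HR HRLB), (of_dsum L Rm HR).
  split; [apply (kernel_space_complete Rm (proj1 HR) beta); auto|].
  split; [apply operator_to_dsum; auto|]; split; [apply operator_of_dsum; auto|].
  split; [apply of_to_dsum|]; split; [apply to_of_dsum; auto|].
  split.
  { eapply Rle_trans; [|apply condition_number_le, Hbeta].
    apply Rmult_le_compat; try apply opnorm_ge0;
      [apply (opnorm_to_dsum L Rm B beta) | apply opnorm_le, (bounded_by_of_dsum L Rm beta)];
      auto. }
  intros T1 T2 HT1 HT2 HC1 HC2.
  exists (perturbation L Rm B T1 T2), (compression L Rm B HR HRLB T2).
  split; [apply operator_perturbation; auto|].
  split; [apply compact_perturbation; auto|].
  split; [apply operator_compression; auto|].
  split; [apply to_dsum_perturbed; auto|].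
  intros Hn1 Hn2.
  assert (b1 : bounded_by (defect_L L T1 T2) eps)
    by (apply bounded_by_opnorm; auto; apply operator_defect_L; auto).
  assert (b2 : bounded_by (defect_R Rm T1 T2) eps)
    by (apply bounded_by_opnorm; auto; apply operator_defect_R; auto).
  eapply Rle_trans; [apply opnorm_le, (bounded_by_perturbation L Rm B beta 2); eauto|].
  replace (eps * (2 * beta) + beta * (2 * (eps * (1 + beta * (2 * beta)))))
    with (c * eps * 1) by (unfold c; ring).
  apply Rmult_le_compat_l; [nra | pose proof (opnorm_ge0 T2); lra].
Qed.
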